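(* Let $\kappa>1$. For every $n$ that is a power of $2$, $\tau_{2n}\le\tau_n^2$.
   Context: Fix $\kappa>1$. Define sequences indexed by powers of two: $z_1=1/\kappa$ and, for each power of two $n\ge1$, $z_{2n}=z_n\bigl(\xi+\sqrt{1+\xi^2}\bigr)$ with $\xi=1-z_n$. The Silver Convergence Rate is $\tau_n=\left(\frac{1-z_n}{1+z_n}\right)^2$. *)

From Stdlib Require Import Reals.
Open Scope R_scope.

(* silver_z kappa k = z_{2^k}: the sequence z_n indexed by powers of two n = 2^k. *)
Fixpoint silver_z (kappa : R) (k : nat) : R :=
  match k with
  | O => 1 / kappa
  | S k' => let zn := silver_z kappa k' in
            let xi := 1 - zn in
            zn * (xi + sqrt (1 + xi ^ 2))
  end.

Definition silver_tau (kappa : R) (k : nat) : R :=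
  ((1 - silver_z kappa k) / (1 + silver_z kappa k)) ^ 2.

From Stdlib Require Import Reals Lra Psatz.
Open Scope R_scope.

(* Write q(z) = (1 - z)/(1 + z), so that tau_n = q(z_n)^2, and
   z_{2n} = S(z_n) with S(z) = z (1 - z + sqrt(1 + (1 - z)^2)).
   The proof rests on three facts:
   - q is antitone on (-1, +oo) and nonnegative on (-1, 1];
   - q(z)^2 = q(D(z)) with D(z) = 2z/(1 + z^2) (the "doubling" map);
   - for z >= 0 one has D(z) <= S(z) <= 1, and S(z) >= 0.
   By induction z_n >= 0, so 0 <= q(S(z_n)) <= q(D(z_n)) = q(z_n)^2, and
   squaring gives tau_{2n} = q(S(z_n))^2 <= q(z_n)^4 = tau_n^2.
   The argument only needs kappa > 0. *)

Definition silver_ratio (z : R) : R := (1 - z) / (1 + z).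

Definition silver_step (z : R) : R := z * ((1 - z) + sqrt (1 + (1 - z) ^ 2)).

Definition doubling (z : R) : R := 2 * z / (1 + z ^ 2).

Lemma silver_z_succ (kappa : R) (k : nat) :
  silver_z kappa (S k) = silver_step (silver_z kappa k).
Proof. reflexivity. Qed.

Lemma silver_tau_ratio (kappa : R) (k : nat) :
  silver_tau kappa k = silver_ratio (silver_z kappa k) ^ 2.
Proof. reflexivity. Qed.

(* q is antitone: it is 2/(1+z) - 1 on (-1, +oo). *)
Lemma silver_ratio_antitone (x y : R) :
  -1 < x -> x <= y -> silver_ratio y <= silver_ratio x.
Proof.
  intros hx hxy; unfold silver_ratio.
  apply (Rmult_le_reg_r ((1 + x) * (1 + y))); [nra|].
  replace ((1 - y) / (1 + y) * ((1 + x) * (1 + y))) with ((1 - y) * (1 + x))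
    by (field; lra).
  replace ((1 - x) / (1 + x) * ((1 + x) * (1 + y))) with ((1 - x) * (1 + y))
    by (field; lra).
  nra.
Qed.

Lemma silver_ratio_nonneg (z : R) : -1 < z <= 1 -> 0 <= silver_ratio z.
Proof.
  intros [h0 h1]; unfold silver_ratio, Rdiv.
  apply Rmult_le_pos; [lra | apply Rlt_le, Rinv_0_lt_compat; lra].
Qed.

Lemma silver_ratio_sq (z : R) :
  z <> -1 -> silver_ratio z ^ 2 = silver_ratio (doubling z).
Proof.
  intros hz; unfold silver_ratio, doubling.
  assert (1 + z <> 0) by lra.
  assert (0 < (1 + z) ^ 2) by (rewrite <- Rsqr_pow2; apply Rsqr_pos_lt; assumption).
  field; split; nra.
Qed.

Lemma doubling_nonneg (z : R) : 0 <= z -> 0 <= doubling z.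
Proof.
  intros hz; unfold doubling, Rdiv.
  apply Rmult_le_pos; [lra | apply Rlt_le, Rinv_0_lt_compat; nra].
Qed.

Lemma sqrt_one_plus_sq (x : R) :
  0 <= sqrt (1 + x ^ 2) /\ sqrt (1 + x ^ 2) * sqrt (1 + x ^ 2) = 1 + x ^ 2.
Proof.
  split; [apply sqrt_pos | apply sqrt_sqrt; nra].
Qed.

(* For z >= 0 the step stays in [0, 1]; the upper bound reduces to
   z^2 (1 + (1 - z)^2) <= (1 - z + z^2)^2, whose difference is (1 - z)^2. *)
Lemma silver_step_bounds (z : R) : 0 <= z -> 0 <= silver_step z <= 1.
Proof.
  intros hz; unfold silver_step.
  destruct (sqrt_one_plus_sq (1 - z)) as [hs0 hs2].
  set (s := sqrt (1 + (1 - z) ^ 2)) in *.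
  assert (hsum : 0 <= (1 - z) + s) by nra.
  assert (hzs : z * s <= 1 - z * (1 - z)).
  { assert (0 <= 1 - z * (1 - z)) by nra.
    assert ((z * s) ^ 2 <= (1 - z * (1 - z)) ^ 2).
    { replace ((z * s) ^ 2) with (z ^ 2 * (s * s)) by ring.
      rewrite hs2.
      assert (0 <= (1 - z) ^ 2) by apply pow2_ge_0.
      replace ((1 - z * (1 - z)) ^ 2) with (z ^ 2 * (1 + (1 - z) ^ 2) + (1 - z) ^ 2)
        by ring.
      lra. }
    nra. }
  split; nra.
Qed.

(* The step dominates the doubling map on [0, +oo). The key inequality
   (1 - z + s)(1 + z^2) >= 2 follows from the identity
   (1 + (1-z)^2)(1 + z^2)^2 = (2 - (1-z)(1+z^2))^2 + (1-z)^4. *)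
Lemma doubling_le_silver_step (z : R) : 0 <= z -> doubling z <= silver_step z.
Proof.
  intros hz; unfold doubling, silver_step.
  destruct (sqrt_one_plus_sq (1 - z)) as [hs0 hs2].
  set (s := sqrt (1 + (1 - z) ^ 2)) in *.
  assert (hp : 0 < 1 + z ^ 2) by nra.
  assert (hkey : 2 <= ((1 - z) + s) * (1 + z ^ 2)).
  { set (d := 2 - (1 - z) * (1 + z ^ 2)).
    assert (hid : (s * (1 + z ^ 2)) ^ 2 = d ^ 2 + ((1 - z) ^ 2) ^ 2).
    { replace ((s * (1 + z ^ 2)) ^ 2) with ((s * s) * (1 + z ^ 2) ^ 2) by ring.
      rewrite hs2; unfold d; ring. }
    assert (0 <= s * (1 + z ^ 2)) by (apply Rmult_le_pos; lra).
    assert (d <= s * (1 + z ^ 2)).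
    { apply Rsqr_incr_0_var; [| assumption].
      rewrite !Rsqr_pow2, hid.
      assert (0 <= ((1 - z) ^ 2) ^ 2) by apply pow2_ge_0.
      lra. }
    unfold d in *; lra. }
  apply (Rmult_le_reg_r (1 + z ^ 2)); [lra|].
  replace (2 * z / (1 + z ^ 2) * (1 + z ^ 2)) with (2 * z) by (field; lra).
  nra.
Qed.

Lemma silver_z_nonneg (kappa : R) (k : nat) : 0 < kappa -> 0 <= silver_z kappa k.
Proof.
  intros hk; induction k as [|k IH].
  - simpl; unfold Rdiv; rewrite Rmult_1_l; apply Rlt_le, Rinv_0_lt_compat, hk.
  - rewrite silver_z_succ; apply silver_step_bounds, IH.
Qed.

Theorem mainTheorem8 (kappa : R) (hk : 1 < kappa) (k : nat) :
  silver_tau kappa (S k) <= (silver_tau kappa k) ^ 2.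
Proof.
  rewrite !silver_tau_ratio, silver_z_succ.
  pose proof (silver_z_nonneg kappa k ltac:(lra)) as hz.
  set (z := silver_z kappa k) in *.
  destruct (silver_step_bounds z hz) as [hs0 hs1].
  rewrite (silver_ratio_sq z) by lra.
  apply pow_incr; split.
  - apply silver_ratio_nonneg; lra.
  - apply silver_ratio_antitone; [| apply doubling_le_silver_step; exact hz].
    pose proof (doubling_nonneg z hz); lra.
Qed.
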